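(* Let $M$ be a finite monoid such that for all $x,y\in M$, either $R(x)\subseteq R(xy)$ or $R(y)\subseteq R(xy)$. Then for all $x,y\in M$ there exists $k\ge1$ such that $(xy)^kx=x$ or $(yx)^ky=y$.
   Context: For $m$ in a monoid $M$, $R(m)=\{my: y\in M\}$ is the right ideal of $m$. *)

From mathcomp Require Import all_boot.
Set Implicit Arguments. Unset Strict Implicit. Unset Printing Implicit Defensive.

(* A finite monoid is given by a finite carrier T, a multiplication and a unit
   satisfying the monoid axioms (stated as explicit hypotheses in the theorem). *)

Definition right_ideal (T : finType) (mul : T -> T -> T) (m : T) : {set T} :=
  [set mul m y | y : T].

Fixpoint mpow (T : Type) (mul : T -> T -> T) (one : T) (x : T) (k : nat) : T :=
  match k with
  | 0 => one
  | k'.+1 => mul x (mpow mul one x k')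
  end.

From mathcomp Require Import all_boot.

Set Implicit Arguments.
Unset Strict Implicit.
Unset Printing Implicit Defensive.

(* If x lies in the right ideal of xy, the dichotomy hypothesis applied to
   ((xy)^n, x) shows inductively that x lies in the right ideal of every power
   (xy)^n.  Powers in a finite monoid are eventually periodic, (xy)^(i+k) =
   (xy)^i with k >= 1, and writing x = (xy)^i t gives (xy)^k x = x.  The
   dichotomy applied to (x, y) and (y, x) shows that x lies in the right ideal
   of xy or y lies in that of yx. *)

Section FiniteMonoid.

Variables (T : finType) (mul : T -> T -> T) (one : T).
Hypotheses (mulA : associative mul) (mul1x : left_id one mul)
  (mulx1 : right_id one mul).

Local Notation R := (right_ideal mul).
Local Notation pow := (mpow mul one).

Lemma mpowD p m n : pow p (m + n) = mul (pow p m) (pow p n).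
Proof. by elim: m => [|m IH] /=; rewrite ?mul1x // IH mulA. Qed.

Lemma mpowSr p n : pow p n.+1 = mul (pow p n) p.
Proof. by rewrite -addn1 mpowD /= mulx1. Qed.

Lemma right_idealP a b : reflect (exists t, a = mul b t) (a \in R b).
Proof. by apply: (iffP imsetP) => [[t _ ->]|[t ->]]; exists t. Qed.

Lemma right_idealxx a : a \in R a.
Proof. by apply/right_idealP; exists one; rewrite mulx1. Qed.

Lemma mem_right_ideal_sub a b : R a \subset R b -> a \in R b.
Proof. by move/subsetP; apply; apply: right_idealxx. Qed.

Lemma right_ideal_trans a b c : a \in R b -> b \in R c -> a \in R c.
Proof.
move=> /right_idealP[s ->] /right_idealP[t ->].
by apply/right_idealP; exists (mul t s); rewrite mulA.
Qed.

Lemma right_ideal_mull c a b : a \in R b -> mul c a \in R (mul c b).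
Proof.
by move=> /right_idealP[t ->]; apply/right_idealP; exists t; rewrite mulA.
Qed.

Lemma right_ideal_mulr c a b : a \in R b -> mul a c \in R b.
Proof.
by move=> /right_idealP[t ->]; apply/right_idealP; exists (mul t c); rewrite mulA.
Qed.

Lemma mpow_eventually_periodic p :
  exists i k, 0 < k /\ pow p (i + k) = pow p i.
Proof.
pose f (i : 'I_#|T|.+1) := pow p i.
have /injectivePn[i [j neq_ij fij_eq]] : ~~ injectiveb f.
  by apply/injectiveP => /leq_card; rewrite card_ord ltnn.
wlog lt_ij : i j neq_ij fij_eq / i < j.
  move=> W; case: (ltngtP i j) => [|lt_ji|/val_inj eq_ij]; first exact: W.
  - by apply: (W j i); rewrite 1?eq_sym.
  - by rewrite eq_ij eqxx in neq_ij.
by exists i, (j - i); rewrite subn_gt0 lt_ij subnKC 1?ltnW.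
Qed.

Lemma mpow_mul_id_of_mem_right_ideal p x :
  (forall n, x \in R (pow p n)) -> exists2 k, 0 < k & mul (pow p k) x = x.
Proof.
move=> x_in_R; have [i [k [k_gt0 per]]] := mpow_eventually_periodic p.
exists k => //; have /right_idealP[t ->] := x_in_R i.
by rewrite mulA -mpowD addnC per.
Qed.

Section RightIdealDichotomy.

Hypothesis dichotomy : forall x y, R x \subset R (mul x y) \/ R y \subset R (mul x y).

Lemma mem_right_ideal_mpow p x : x \in R p -> forall n, x \in R (pow p n).
Proof.
move=> x_in_Rp; elim=> [|n IH].
  by apply/right_idealP; exists x; rewrite /= mul1x.
have x_in_Rpnx : x \in R (mul (pow p n) x).
  case: (dichotomy (pow p n) x) => /mem_right_ideal_sub // pn_in_R.
  exact: right_ideal_trans IH pn_in_R.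
by apply: right_ideal_trans x_in_Rpnx _; rewrite mpowSr right_ideal_mull.
Qed.

Lemma mem_right_ideal_mul_or x y : x \in R (mul x y) \/ y \in R (mul y x).
Proof.
case: (dichotomy x y) => [/mem_right_ideal_sub|/mem_right_ideal_sub y_in_Rxy];
  first by left.
case: (dichotomy y x) => [/mem_right_ideal_sub|/mem_right_ideal_sub x_in_Ryx];
  first by right.
by left; apply: right_ideal_trans x_in_Ryx (right_ideal_mulr x y_in_Rxy).
Qed.

End RightIdealDichotomy.

End FiniteMonoid.

Theorem lemmaB2 (T : finType) (mul : T -> T -> T) (one : T)
  (mulA : associative mul) (mul1x : left_id one mul) (mulx1 : right_id one mul)
  (hR : forall x y : T,
      right_ideal mul x \subset right_ideal mul (mul x y) \/
      right_ideal mul y \subset right_ideal mul (mul x y)) :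
  forall x y : T, exists k : nat, 1 <= k /\
    (mul (mpow mul one (mul x y) k) x = x \/ mul (mpow mul one (mul y x) k) y = y).
Proof.
move=> x y.
have pow_fix a b : a \in right_ideal mul (mul a b) ->
    exists2 k, 0 < k & mul (mpow mul one (mul a b) k) a = a.
  move/(mem_right_ideal_mpow mulA mul1x mulx1 hR).
  exact: mpow_mul_id_of_mem_right_ideal.
case: (mem_right_ideal_mul_or mulA mulx1 hR x y) => /pow_fix[k k_gt0 pow_k_fix].
- by exists k; split; [|left].
- by exists k; split; [|right].
Qed.
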